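(* Let $P\subset\mathbb{R}^d$ be a set of $n$ points and $s>1$. Every output $\mathcal{W}$ of the greedy $s$-WSPD algorithm (described in the context), regardless of the order in which pairs are chosen, has size $O(n s^d)$, where the implied constant depends only on $d$.
   Context: Fix $d\ge1$; $|xy|$ is Euclidean distance. For $p\in P$ and $r\ge0$, $B_r(p)=\{x\in P:|px|\le r\}$. Greedy $s$-WSPD algorithm: initially no pair of points is covered and $\mathcal{W}=\emptyset$. Repeat until every pair of distinct points of $P$ is covered: choose an arbitrary pair $(p,q)$ of distinct points not yet covered; add the pair $(B_r(p),B_r(q))$ to $\mathcal{W}$ with $r=|pq|/(2s+2)$; mark every pair $(x,y)$ with $x\in B_r(p)$ and $y\in B_r(q)$ as covered. The size of $\mathcal{W}$ is the number of pairs it contains. (The output is an $s$-well-separated pair decomposition: each pair $(A,B)$ satisfies $\min_{x\in A,y\in B}|xy|\ge s\max(\mathrm{diam} A,\mathrm{diam} B)$ and every pair of points is covered.) *)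

From HB Require Import structures.
From mathcomp Require Import all_boot all_order all_algebra.
From mathcomp Require Import Rstruct.
From Stdlib Require Rdefinitions.

Set Implicit Arguments.
Unset Strict Implicit.
Unset Printing Implicit Defensive.

Import Order.TTheory GRing.Theory Num.Theory.
Local Open Scope ring_scope.

Notation point d := 'rV[Rdefinitions.R]_d.

Definition edist (d : nat) (x y : point d) : Rdefinitions.R :=
  (@Num.sqrt Rdefinitions.R) (\sum_(i < d) (x ord0 i - y ord0 i) ^+ 2).

Definition in_ball (d : nat) (P : seq (point d)) (p : point d) (r : Rdefinitions.R)
  (x : point d) : bool :=
  (x \in P) && (edist p x <= r).

Definition wspd_radius (d : nat) (s : Rdefinitions.R) (pq : point d * point d) : Rdefinitions.R :=
  edist pq.1 pq.2 / (2 * s + 2).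

Definition covers (d : nat) (P : seq (point d)) (s : Rdefinitions.R)
  (pq : point d * point d) (x y : point d) : bool :=
  let r := wspd_radius s pq in
  (in_ball P pq.1 r x && in_ball P pq.2 r y) ||
  (in_ball P pq.2 r x && in_ball P pq.1 r y).

Definition covered (d : nat) (P : seq (point d)) (s : Rdefinitions.R)
  (ws : seq (point d * point d)) (x y : point d) : bool :=
  has (fun pq => covers P s pq x y) ws.

(* The output W consists of
   the pairs (B_r(p_i), B_r(q_i)), one per iteration. *)
Definition greedy_run (d : nat) (P : seq (point d)) (s : Rdefinitions.R)
  (run : seq (point d * point d)) : Prop :=
  (forall i, (i < size run)%N ->
     let pq := nth (0, 0) run i in
     [/\ pq.1 \in P, pq.2 \in P, pq.1 != pq.2
       & ~~ covered P s (take i run) pq.1 pq.2]) /\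
  (forall x y, x \in P -> y \in P -> x != y -> covered P s run x y).

Definition wspd_size (d : nat) (run : seq (point d * point d)) : nat :=
  size run.

From HB Require Import structures.
From mathcomp Require Import all_boot all_order all_algebra.
From mathcomp Require Import Rstruct.
From mathcomp Require Import ring lra zify.
From Stdlib Require Rdefinitions.

Set Implicit Arguments.
Unset Strict Implicit.
Unset Printing Implicit Defensive.

Import Order.TTheory GRing.Theory Num.Theory.
Local Open Scope ring_scope.

Local Notation R := Rdefinitions.R.

(* Order P farthest-first as X_0, X_1, ..., and let lam_c be the distance
   from X_c to the earlier points: the lam_c are nonincreasing, so the points
   before X_c are lam_c-separated.  Charge a chosen pair (p, q) of length L to
   the indices of the first points of X within t = L / (6s + 6) of p and of q.
   The later index c has lam_c > t and the earlier one e satisfies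
   |X_c X_e| <= (6s + 8) lam_c, so by packing each c is charged together with
   only O(s)^d indices e.  Two chosen pairs with the same charge have lengths
   within a factor 2 and endpoints within the WSPD radius of each other, so the
   later one would already have been covered: charges are distinct, and
   |W| <= n O(s)^d. *)

Lemma cauchy_schwarz (d : nat) (a b : 'I_d -> R) :
  (\sum_i a i * b i) ^+ 2 <= (\sum_i a i ^+ 2) * (\sum_i b i ^+ 2).
Proof.
have lagrange : \sum_i \sum_j (a i * b j - a j * b i) ^+ 2 =
    (\sum_i a i ^+ 2) * (\sum_i b i ^+ 2) + (\sum_i b i ^+ 2) * (\sum_i a i ^+ 2)
    - 2 * (\sum_i a i * b i) ^+ 2.
  have expand i j : (a i * b j - a j * b i) ^+ 2 =
      a i ^+ 2 * b j ^+ 2 + b i ^+ 2 * a j ^+ 2 - 2 * ((a i * b i) * (a j * b j)).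
    by ring.
  under eq_bigr => i _ do under eq_bigr => j _ do rewrite expand.
  rewrite expr2 !mulr_suml mulr_sumr -sumrN -!big_split /=.
  apply: eq_bigr => i _.
  rewrite -mulrA !mulr_sumr -sumrN -!big_split /=.
  by apply: eq_bigr => j _; ring.
have : 0 <= \sum_i \sum_j (a i * b j - a j * b i) ^+ 2.
  by apply: sumr_ge0 => i _; apply: sumr_ge0 => j _; exact: sqr_ge0.
rewrite lagrange; lra.
Qed.

Section EuclideanDistance.
Variable d : nat.
Implicit Types x y z : point d.

Lemma edist_ge0 x y : 0 <= edist x y.
Proof. exact: sqrtr_ge0. Qed.

Lemma edist_sqr x y : edist x y ^+ 2 = \sum_(i < d) (x ord0 i - y ord0 i) ^+ 2.
Proof. by rewrite sqr_sqrtr //; apply: sumr_ge0 => i _; exact: sqr_ge0. Qed.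

Lemma edistxx x : edist x x = 0.
Proof. by rewrite /edist big1 ?sqrtr0 // => i _; rewrite subrr expr0n. Qed.

Lemma edistC x y : edist x y = edist y x.
Proof.
by rewrite /edist; congr Num.sqrt; apply: eq_bigr => i _; rewrite -sqrrN opprB.
Qed.

Lemma edist_eq0 x y : edist x y = 0 -> x = y.
Proof.
move=> xy0; have sum0 : \sum_(i < d) (x ord0 i - y ord0 i) ^+ 2 = 0.
  by rewrite -edist_sqr xy0 expr0n.
apply/rowP => i; apply/eqP; rewrite -subr_eq0 -sqrf_eq0; apply/eqP.
by apply: (psumr_eq0P _ sum0) => // j _; exact: sqr_ge0.
Qed.

Lemma edist_gt0 x y : x != y -> 0 < edist x y.
Proof.
move=> xy; rewrite lt_def edist_ge0 andbT.
by apply: contra xy => /eqP/edist_eq0 ->.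
Qed.

Lemma edist_triangle x y z : edist x z <= edist x y + edist y z.
Proof.
pose a i := x ord0 i - y ord0 i; pose b i := y ord0 i - z ord0 i.
have xy0 := edist_ge0 x y; have yz0 := edist_ge0 y z; have xz0 := edist_ge0 x z.
have exz : edist x z ^+ 2 =
    edist x y ^+ 2 + edist y z ^+ 2 + 2 * \sum_i a i * b i.
  rewrite !edist_sqr mulr_sumr -!big_split /=.
  by apply: eq_bigr => i _; rewrite /a /b; ring.
have cs := cauchy_schwarz a b; rewrite -!edist_sqr in cs.
have : \sum_i a i * b i <= edist x y * edist y z.
  by have := mulr_ge0 xy0 yz0; nra.
nra.
Qed.

Lemma normB_coord_le_edist x y (i : 'I_d) : `|x ord0 i - y ord0 i| <= edist x y.
Proof.
rewrite -(ler_pXn2r (n := 2)) ?nnegrE ?normr_ge0 ?edist_ge0 //.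
rewrite real_normK ?num_real // edist_sqr (bigD1 i) //= lerDl.
by apply: sumr_ge0 => j _; exact: sqr_ge0.
Qed.

Lemma edist_sqr_le x y e :
  (forall i, `|x ord0 i - y ord0 i| <= e) -> edist x y ^+ 2 <= d%:R * e ^+ 2.
Proof.
move=> close; rewrite edist_sqr mulr_natl -[X in _ *+ X]card_ord -sumr_const.
apply: ler_sum => i _; rewrite -real_normK ?num_real //.
by rewrite ler_pXn2r ?nnegrE ?normr_ge0 // (le_trans _ (close i)).
Qed.

End EuclideanDistance.

Lemma seq_argmax (T : eqType) disp (U : orderType disp) (f : T -> U) (s : seq T) :
  s != [::] -> exists2 x, x \in s & forall y, y \in s -> (f y <= f x)%O.
Proof.
elim: s => [//|z s IH] _.
have [->|/IH [x xs maxx]] := eqVneq s [::].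
  by exists z; rewrite ?mem_head // => y; rewrite inE => /eqP ->.
have [fzx|fxz] := leP (f z) (f x).
  by exists x; rewrite ?inE ?xs ?orbT // => y /predU1P [->|/maxx].
exists z; first exact: mem_head.
by move=> y /predU1P [->//|/maxx fyx]; exact: le_trans fyx (ltW fxz).
Qed.

Section FarthestFirst.
Variable d : nat.
Implicit Types (s X P : seq (point d)) (x y : point d).

(* For empty [s] this is the junk value [edist y 0]. *)
Definition dist_to s y : R := \big[Num.min/edist y (head 0 s)]_(x <- s) edist y x.

Lemma dist_to_le s x y : x \in s -> dist_to s y <= edist y x.
Proof. by move=> xs; exact: ge_bigmin_seq. Qed.

Lemma dist_to_ge0 s y : 0 <= dist_to s y.
Proof.
rewrite /dist_to; elim/big_ind: _ => [|u v u0 v0|x _]; rewrite ?le_min ?u0 ?edist_ge0 //.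
Qed.

Lemma dist_to_gt s y b :
  s != [::] -> (forall x, x \in s -> b < edist y x) -> b < dist_to s y.
Proof.
case: s => [//|z s] _ far; rewrite /dist_to big_seq.
elim/big_ind: _ => [|u v bu bv|x /far //]; first by rewrite far ?mem_head.
by rewrite lt_min bu bv.
Qed.

Lemma dist_to_subset s s' y :
  s != [::] -> {subset s <= s'} -> dist_to s' y <= dist_to s y.
Proof.
case: s => [//|z s] _ ss'; rewrite [in X in _ <= X]/dist_to big_seq.
elim/big_ind: _ => [|u v bu bv|x xs]; last exact: dist_to_le (ss' x xs).
  by rewrite dist_to_le ?ss' ?mem_head.
by rewrite le_min bu bv.
Qed.

Definition insertion_radius X k : R := dist_to (take k X) X`_k.

Definition farthest_first P X : Prop :=
  forall i, (0 < i < size X)%N -> forall y, y \in P ->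
    dist_to (take i X) y <= insertion_radius X i.

Lemma mem_take_nth X j k : (j < k <= size X)%N -> X`_j \in take k X.
Proof.
move=> /andP [jk kX]; rewrite -(nth_take 0 jk); apply: mem_nth.
by rewrite size_takel.
Qed.

Lemma insertion_radius_le_edist X j k :
  (j < k < size X)%N -> insertion_radius X k <= edist X`_j X`_k.
Proof.
move=> /andP [jk kX]; rewrite edistC; apply: dist_to_le.
by rewrite mem_take_nth // jk ltnW.
Qed.

Lemma insertion_radius_nonincr P X k c :
  farthest_first P X -> {subset X <= P} ->
  (0 < k <= c)%N -> (c < size X)%N -> insertion_radius X c <= insertion_radius X k.
Proof.
move=> ffX XP /andP [k0 kc] cX.
have kX := leq_ltn_trans kc cX.
apply: le_trans (ffX k _ X`_c _); last by rewrite XP ?mem_nth.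
  apply: dist_to_subset; first by rewrite -size_eq0 size_takel ?(ltnW kX) -?lt0n.
  by move=> x; rewrite -(take_takel X kc); exact: mem_take.
by rewrite k0.
Qed.

Lemma insertion_radius_le_edist_before P X e e' c :
  farthest_first P X -> {subset X <= P} ->
  (e < e' <= c)%N -> (c < size X)%N -> insertion_radius X c <= edist X`_e X`_e'.
Proof.
move=> ffX XP /andP [ee' e'c] cX.
apply: le_trans (insertion_radius_le_edist _).
  by apply: insertion_radius_nonincr ffX XP _ cX; rewrite e'c (leq_ltn_trans _ ee').
by rewrite ee' (leq_ltn_trans e'c cX).
Qed.

Lemma farthest_first_prefix_exists P k : uniq P -> (k <= size P)%N ->
  exists X, [/\ uniq X, {subset X <= P}, size X = k & farthest_first P X].
Proof.
move=> uP; elim: k => [|k IH] kP.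
  by exists [::]; split => // i /andP [/ltn_trans lt /lt].
have [X [uX XP szX ffX]] := IH (ltnW kP).
pose rest := [seq y <- P | y \notin X].
have rest_neq0 : rest != [::].
  apply: contraTneq kP => rest0; rewrite -ltnNge ltnS -szX.
  apply: uniq_leq_size uP _ => y yP; apply/negPn/negP => yX.
  have : y \in rest by rewrite mem_filter yX.
  by rewrite rest0.
have [z] := seq_argmax (dist_to X) rest_neq0.
rewrite mem_filter => /andP [zX zP] zfar.
exists (rcons X z); split.
- by rewrite rcons_uniq zX uX.
- by move=> x; rewrite mem_rcons inE => /predU1P [->|/XP].
- by rewrite size_rcons szX.
move=> i; rewrite size_rcons ltnS => /andP [i0]; rewrite leq_eqVlt.
case/predU1P => [->|iX] y yP.
  rewrite /insertion_radius -cats1 take_size_cat // nth_cat ltnn subnn /=.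
  have [yX|yX] := boolP (y \in X); last by apply: zfar; rewrite mem_filter yX.
  by rewrite (le_trans (dist_to_le _ yX)) ?edistxx ?dist_to_ge0.
rewrite /insertion_radius -cats1 takel_cat ?(ltnW iX) // nth_cat iX.
by apply: ffX; rewrite // i0.
Qed.

Lemma farthest_first_exists P : uniq P ->
  exists X, perm_eq P X /\ farthest_first P X.
Proof.
move=> uP; have [X [uX XP szX ffX]] := farthest_first_prefix_exists uP (leqnn _).
exists X; split=> //; apply: uniq_perm => //.
have [_ eqXP] := uniq_min_size uX XP (eq_leq (esym szX)).
by move=> y; rewrite eqXP.
Qed.

Definition first_within X p r : nat := find (fun x => edist p x <= r) X.

Lemma first_within_spec P X p r :
  farthest_first P X -> p \in P -> p \in X -> 0 <= r ->
  let m := first_within X p r in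
  [/\ (m < size X)%N, edist p X`_m <= r & (0 < m)%N -> r < insertion_radius X m].
Proof.
move=> ffX pP pX r0 m.
have hasX : has (fun x => edist p x <= r) X by apply/hasP; exists p; rewrite ?edistxx.
have mX : (m < size X)%N by rewrite -has_find.
split=> // [|m0]; first exact: (nth_find 0 hasX).
apply: lt_le_trans (ffX m _ p pP); last by rewrite m0.
apply: dist_to_gt; first by rewrite -size_eq0 size_takel ?(ltnW mX) -?lt0n.
move=> x /(nthP 0) [j]; rewrite size_takel ?(ltnW mX) // => jm <-.
by rewrite nth_take // ltNge; exact: negbT (before_find 0 jm).
Qed.

End FarthestFirst.

Lemma truncn_eq_normB_lt (a b : R) :
  0 <= a -> 0 <= b -> Num.truncn a = Num.truncn b -> `|a - b| < 1.
Proof.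
move=> a0 b0 ab; have := truncn_itv a0; have := truncn_itv b0.
by rewrite ab -natr1 ltr_norml => /andP [? ?] /andP [? ?]; apply/andP; split; lra.
Qed.

(* Grid cells of side [rho / (d + 1)] have diameter less than [rho], so
   [rho]-separated points lie in distinct cells of the cube around [c]. *)
Lemma packing_bound (d : nat) (I : eqType) (J : seq I) (pts : I -> point d)
    (c : point d) (rho rad : R) :
  0 < rho -> uniq J ->
  (forall e, e \in J -> edist c (pts e) <= rad) ->
  {in J &, forall e e', e != e' -> rho <= edist (pts e) (pts e')} ->
  (size J <= (Num.truncn (2 * d.+1%:R * rad / rho)).+1 ^ d)%N.
Proof.
move=> rho0 uJ near sep.
set k := d.+1%:R / rho; have k0 : 0 < k by rewrite divr_gt0.
have -> : 2 * d.+1%:R * rad / rho = 2 * rad * k by rewrite /k; field; exact: lt0r_neq0.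
set M := Num.truncn _.
pose u e i := (pts e ord0 i - c ord0 i + rad) * k.
have u_itv e i : e \in J -> 0 <= u e i <= 2 * rad * k.
  move=> eJ; have := le_trans (normB_coord_le_edist c (pts e) i) (near e eJ).
  rewrite distrC ler_norml => /andP [? ?].
  by rewrite /u mulr_ge0 ?ler_pM2r ?(ltW k0) //=; lra.
have cell_lt e i : e \in J -> (Num.truncn (u e i) < M.+1)%N.
  by move=> eJ; rewrite ltnS le_truncn //; have /andP [] := u_itv e i eJ.
pose cell e : {ffun 'I_d -> 'I_M.+1} := [ffun i => inord (Num.truncn (u e i))].
have cell_inj : {in J &, injective cell}.
  move=> e e' eJ e'J same_cell; apply/eqP/negPn/negP => ee'.
  have coord i : `|pts e ord0 i - pts e' ord0 i| <= rho / d.+1%:R.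
    have := congr1 (fun f : {ffun 'I_d -> 'I_M.+1} => val (f i)) same_cell.
    rewrite /= !ffunE !inordK ?cell_lt //.
    have /andP [ue0 _] := u_itv e i eJ; have /andP [ue'0 _] := u_itv e' i e'J.
    move=> /(truncn_eq_normB_lt ue0 ue'0).
    have -> : u e i - u e' i = (pts e ord0 i - pts e' ord0 i) * k by rewrite /u; ring.
    by rewrite normrM (gtr0_norm k0) -ltr_pdivlMr // /k invf_div mul1r => /ltW.
  have far : rho ^+ 2 <= edist (pts e) (pts e') ^+ 2.
    by rewrite lerXn2r ?nnegrE ?(ltW rho0) ?edist_ge0 ?sep.
  have small : d%:R * (rho / d.+1%:R) ^+ 2 < rho ^+ 2.
    rewrite expr_div_n mulrA ltr_pdivrMr ?exprn_gt0 // -natr1.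
    have : 0 < rho ^+ 2 by rewrite exprn_gt0.
    by have : 0 <= d%:R :> R by []; nra.
  by have := le_lt_trans (edist_sqr_le coord) small; rewrite ltNge far.
rewrite -(size_map cell) -(card_uniqP _); last by rewrite map_inj_in_uniq.
by apply: leq_trans (max_card _) _; rewrite card_ffun !card_ord.
Qed.

(* Two segments [pq] and [p'q'] whose endpoints are both within a
   [1/kap]-fraction of their length from common points [a] and [b] have
   comparable lengths ([|p'q'| <= 2 |pq|]), hence nearby endpoints. *)
Lemma endpoints_close (d : nat) (kap : R) (p q p' q' a b : point d) :
  12 <= kap ->
  edist p a <= edist p q / kap -> edist q b <= edist p q / kap ->
  edist p' a <= edist p' q' / kap -> edist q' b <= edist p' q' / kap ->
  edist p p' <= 3 * (edist p q / kap) /\ edist q q' <= 3 * (edist p q / kap).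
Proof.
move=> kap12 pa qb p'a q'b.
have kap0 : 0 < kap by lra.
set L := edist p q in pa qb *; set L' := edist p' q' in p'a q'b.
have ab : edist a b <= L + 2 * (L / kap).
  have := edist_triangle a p b; have := edist_triangle p q b.
  by rewrite (edistC a p) -/L; lra.
have L'_le : L' <= 2 * (L' / kap) + L + 2 * (L / kap).
  have := edist_triangle p' a q'; have := edist_triangle a b q'.
  by rewrite (edistC b q') -/L'; lra.
set A := L / kap in pa qb ab L'_le *; set A' := L' / kap in p'a q'b L'_le.
have eL : L = kap * A by rewrite /A mulrC divfK ?lt0r_neq0.
have eL' : L' = kap * A' by rewrite /A' mulrC divfK ?lt0r_neq0.
have A0 : 0 <= A by rewrite /A divr_ge0 ?edist_ge0 ?ltW.
have A'0 : 0 <= A' by rewrite /A' divr_ge0 ?edist_ge0 ?ltW.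
have A'_le : A' <= 2 * A by move: L'_le; rewrite eL eL'; nra.
have := edist_triangle p a p'; have := edist_triangle q b q'.
by rewrite (edistC a p') (edistC b q'); split; lra.
Qed.

Lemma maxn_minn_eq (a b a' b' : nat) :
  maxn a b = maxn a' b' -> minn a b = minn a' b' ->
  (a = a' /\ b = b') \/ (a = b' /\ b = a').
Proof. lia. Qed.

Section Charging.
Variables (d : nat) (P X : seq (point d)) (s : R).
Hypotheses (s_gt1 : 1 < s) (ffX : farthest_first P X) (XP : {subset X <= P}).

Definition near_pair c e : bool :=
  (0 < insertion_radius X c) &&
  (edist X`_c X`_e <= (6 * s + 8) * insertion_radius X c).

Definition candidate_charges : seq (nat * nat) :=
  [seq (c, e) | c <- iota 0 (size X), e <- filter (near_pair c) (iota 0 c)].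

Lemma size_candidate_charges :
  (size candidate_charges <=
     size X * (Num.truncn (2 * d.+1%:R * (6 * s + 8))).+1 ^ d)%N.
Proof.
set K := (_ ^ d)%N; rewrite size_allpairs_dep sumnE big_map big_seq.
apply: (@leq_trans (\sum_(c <- iota 0 (size X) | c \in iota 0 (size X)) K)).
  2: by rewrite -big_seq big_const_seq count_predT size_iota iter_addn_0 mulnC.
apply: leq_sum => c; rewrite mem_iota add0n => /andP [_ cX].
have [lam0|lam0] := boolP (0 < insertion_radius X c); last first.
  by rewrite /near_pair (negbTE lam0) /= filter_pred0.
rewrite /K; have -> : 2 * d.+1%:R * (6 * s + 8) =
    2 * d.+1%:R * ((6 * s + 8) * insertion_radius X c) / insertion_radius X c.
  by field; exact: lt0r_neq0.
apply: (packing_bound (pts := nth 0 X) (c := X`_c)) => //.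
- exact/filter_uniq/iota_uniq.
- by move=> e; rewrite mem_filter => /andP [/andP [_]].
move=> e e'; rewrite !mem_filter !mem_iota !add0n /=.
move=> /andP [_ ec] /andP [_ e'c]; rewrite neq_ltn => /orP [] ee'.
  by apply: insertion_radius_le_edist_before ffX XP _ cX; rewrite ee' ltnW.
rewrite edistC.
by apply: insertion_radius_le_edist_before ffX XP _ cX; rewrite ee' ltnW.
Qed.

Lemma near_pair_anchors (p q : point d) (r : R) (a b : nat) :
  0 < r -> edist p q <= (6 * s + 6) * r ->
  edist p X`_a <= r -> edist q X`_b <= r -> r < insertion_radius X b ->
  near_pair b a.
Proof.
move=> r0 pq pa qb r_lt; apply/andP; split; first exact: lt_trans r_lt.
have := edist_triangle X`_b q X`_a; have := edist_triangle q p X`_a.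
rewrite (edistC X`_b q) (edistC q p).
have s8 : 0 <= 6 * s + 8 by have := s_gt1; lra.
have := ler_wpM2l s8 (ltW r_lt).
lra.
Qed.

Section Run.
Variable run : seq (point d * point d).
Hypotheses (PX : {subset P <= X}) (run_greedy : greedy_run P s run).

Let pq i := nth (0, 0) run i.
Let r i := edist (pq i).1 (pq i).2 / (6 * s + 6).
Let anchor i x := first_within X x (r i).

Definition charge i : nat * nat :=
  let a := anchor i (pq i).1 in let b := anchor i (pq i).2 in (maxn a b, minn a b).

Lemma chosen_pair_spec i : (i < size run)%N ->
  [/\ (pq i).1 \in P, (pq i).2 \in P, (pq i).1 != (pq i).2
    & ~~ covered P s (take i run) (pq i).1 (pq i).2].
Proof. exact: run_greedy.1. Qed.

Lemma radius_gt0 i : (i < size run)%N -> 0 < r i.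
Proof.
have := s_gt1 => s1 /chosen_pair_spec [_ _ pq_neq _].
by rewrite divr_gt0 ?edist_gt0 //; lra.
Qed.

Lemma anchor_spec i x : (i < size run)%N -> x \in P ->
  [/\ (anchor i x < size X)%N, edist x X`_(anchor i x) <= r i
    & (0 < anchor i x)%N -> r i < insertion_radius X (anchor i x)].
Proof.
by move=> ir xP; exact: first_within_spec ffX xP (PX xP) (ltW (radius_gt0 ir)).
Qed.

Lemma charge_mem i : (i < size run)%N -> charge i \in candidate_charges.
Proof.
move=> ir; have [pP qP _ _] := chosen_pair_spec ir.
have [pX p_near p_far] := anchor_spec ir pP.
have [qX q_near q_far] := anchor_spec ir qP.
have r0 := radius_gt0 ir; have s1 := s_gt1.
have pq_len : edist (pq i).1 (pq i).2 = (6 * s + 6) * r i.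
  by rewrite /r mulrC divfK // lt0r_neq0 //; lra.
have pq_le : edist (pq i).1 (pq i).2 <= (6 * s + 6) * r i by rewrite pq_len.
rewrite /charge; apply/allpairsPdep.
(* [ltngtP] also rewrites the [maxn] and [minn] of the goal. *)
case: (ltngtP (anchor i (pq i).1) (anchor i (pq i).2)) => [pq_lt|qp_lt|same_anchor].
- exists (anchor i (pq i).2), (anchor i (pq i).1); split.
  + by rewrite mem_iota add0n.
  + rewrite mem_filter mem_iota add0n pq_lt leq0n !andbT.
    apply: (near_pair_anchors r0 pq_le p_near q_near).
    exact/q_far/(leq_ltn_trans _ pq_lt).
  + by [].
- exists (anchor i (pq i).1), (anchor i (pq i).2); split.
  + by rewrite mem_iota add0n.
  + rewrite mem_filter mem_iota add0n qp_lt leq0n !andbT.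
    apply: (near_pair_anchors r0 _ q_near p_near); first by rewrite edistC.
    exact/p_far/(leq_ltn_trans _ qp_lt).
  + by [].
- move: p_near; rewrite same_anchor => p_near.
  have := edist_triangle (pq i).1 X`_(anchor i (pq i).2) (pq i).2.
  by rewrite (edistC X`_(anchor _ _)) pq_len; nra.
Qed.

Lemma charge_inj i j : (i < j < size run)%N -> charge i != charge j.
Proof.
move=> /andP [ij jr]; have ir := ltn_trans ij jr; have s1 := s_gt1.
apply/negP; rewrite /charge => /eqP [same_max same_min].
have [piP qiP _ _] := chosen_pair_spec ir.
have [pjP qjP _ uncovered] := chosen_pair_spec jr.
have [_ pi_near _] := anchor_spec ir piP; have [_ qi_near _] := anchor_spec ir qiP.
have [_ pj_near _] := anchor_spec jr pjP; have [_ qj_near _] := anchor_spec jr qjP.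
have kap12 : 12 <= 6 * s + 6 by lra.
apply: (negP uncovered); apply/hasP; exists (pq i).
  by rewrite /pq -(nth_take (0, 0) ij) mem_nth // size_takel // ltnW.
have radius : wspd_radius s (pq i) = 3 * r i by rewrite /wspd_radius /r; field; lra.
rewrite /covers /= radius /in_ball pjP qjP /=.
have [[a_eq b_eq]|[a_eq b_eq]] := maxn_minn_eq same_max same_min.
- rewrite a_eq in pi_near; rewrite b_eq in qi_near.
  by have [-> ->] := endpoints_close kap12 pi_near qi_near pj_near qj_near.
- rewrite a_eq in pi_near; rewrite b_eq in qi_near.
  rewrite /r (edistC (pq j).1 (pq j).2) in pj_near qj_near.
  by have [-> ->] := endpoints_close kap12 pi_near qi_near qj_near pj_near; rewrite orbT.
Qed.

Lemma size_run_le_candidates : (size run <= size candidate_charges)%N.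
Proof.
rewrite -(size_iota 0 (size run)) -(size_map charge); apply: uniq_leq_size.
  rewrite map_inj_in_uniq ?iota_uniq // => i j.
  rewrite !mem_iota !add0n => /andP [_ ir] /andP [_ jr] same.
  case: (ltngtP i j) => [ij|ji|//].
  - by have := @charge_inj i j; rewrite ij jr same eqxx => /(_ isT).
  - by have := @charge_inj j i; rewrite ji ir same eqxx => /(_ isT).
by move=> c /mapP [i]; rewrite mem_iota => /andP [_ ir] ->; exact: charge_mem.
Qed.

End Run.

End Charging.

Lemma grid_side_le (d : nat) (s : R) : (1 <= d)%N -> 1 < s ->
  (Num.truncn (2 * d.+1%:R * (6 * s + 8))).+1%:R <= 57 * d%:R * s.
Proof.
move=> d1 s1; have d1R : 1 <= d%:R :> R by rewrite ler1n.
have x0 : 0 <= 2 * d.+1%:R * (6 * s + 8) by rewrite !mulr_ge0 //; lra.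
have /andP [trunc_le _] := truncn_itv x0.
rewrite -!natr1 in trunc_le *; nra.
Qed.

Theorem theorem8 (d : nat) (hd : (1 <= d)%N) :
  exists C : Rdefinitions.R, 0 < C /\
    forall (P : seq 'rV[Rdefinitions.R]_d) (s : Rdefinitions.R), uniq P -> 1 < s ->
    forall run : seq ('rV[Rdefinitions.R]_d * 'rV[Rdefinitions.R]_d), greedy_run P s run ->
      (wspd_size run)%:R <= C * (size P)%:R * s ^+ d.
Proof.
exists ((57 * d%:R) ^+ d); split; first by rewrite exprn_gt0 // mulr_gt0 ?ltr0n.
move=> P s uP s1 run greedy.
have [X [permPX ffX]] := farthest_first_exists uP.
have PX : {subset P <= X} by move=> x; rewrite (perm_mem permPX).
have XP : {subset X <= P} by move=> x; rewrite (perm_mem permPX).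
have := leq_trans (size_run_le_candidates s1 ffX PX greedy)
  (size_candidate_charges s ffX XP).
rewrite -(perm_size permPX) -(ler_nat R) natrM natrX => /le_trans; apply.
rewrite [leRHS]mulrAC -exprMn [leRHS]mulrC ler_wpM2l ?ler0n // lerXn2r ?nnegrE ?ler0n //.
  exact: le_trans (grid_side_le hd s1).
exact: grid_side_le.
Qed.
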